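(* Let $R$ be an $n$-ary relation on a domain $\mathcal{D}$ with finite ternarity that has no unary Cartesian factor. Then $\mathrm{ter}(R)$ and $n$ have the same parity.
   Context: Relations are attributed: $R\subseteq\mathcal{D}^\Sigma$, $\Sigma$ finite, arity $n=|\Sigma|$; $\pi_\Gamma$ restricts tuples to $\Gamma$; the join of $R_i\subseteq\mathcal{D}^{\Lambda_i}$ is $\{a\in\mathcal{D}^{\cup\Lambda_i}:a|_{\Lambda_i}\in R_i\ \forall i\}$. $R$ has a unary Cartesian factor if for some $i\in\Sigma$ there are $P\subseteq\mathcal{D}^{\{i\}}$ and $Q\subseteq\mathcal{D}^{\Sigma\setminus\{i\}}$ with $R=\{a: a|_{\{i\}}\in P,\ a|_{\Sigma\setminus\{i\}}\in Q\}$. Bonds: relations $R_i\subseteq\mathcal{D}^{\Lambda_i}$ are bondable if no attribute lies in three or more $\Lambda_i$; their bond is $\pi_\Gamma[R_1\Join\dots\Join R_m]$ where $\Gamma$ is the set of attributes lying in exactly one $\Lambda_i$. A bond is subternaric if all factors have arity $\le3$. The ternarity $\mathrm{ter}(R)$ is the minimal number of factors of arity $3$ over all representations of $R$ as a subternaric bond (a relation of arity $\le3$ counts as a one-factor bond of itself), and $\infty$ if none exists. *)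

From mathcomp Require Import all_boot finmap.
Set Implicit Arguments. Unset Strict Implicit. Unset Printing Implicit Defensive.
Local Open Scope fset_scope.

(* Attributes are natural numbers (an infinite supply, so that bonds may use
   internal attributes).  A tuple over the attribute set S is a partial
   function a : nat -> option D whose domain is exactly S. *)
Definition has_dom (D : Type) (S : pred nat) (a : nat -> option D) : Prop :=
  forall x, isSome (a x) = S x.

Definition restr (D : Type) (p : pred nat) (a : nat -> option D) : nat -> option D :=
  fun x => if p x then a x else None.

Record relation (D : Type) := Relation {
  scope : {fset nat};
  rmem : (nat -> option D) -> Prop }.

Definition wf_rel (D : Type) (R : relation D) : Prop :=
  forall a, rmem R a -> has_dom (fun x => x \in scope R) a.

Definition arity (D : Type) (R : relation D) : nat := #|` scope R |.

Definition occ (D : Type) (Rs : seq (relation D)) (x : nat) : nat :=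
  count (fun S => x \in scope S) Rs.

Definition bondable (D : Type) (Rs : seq (relation D)) : Prop :=
  forall x, occ Rs x <= 2.

Fixpoint in_all (D : Type) (Rs : seq (relation D)) (a : nat -> option D) : Prop :=
  match Rs with
  | [::] => True
  | F :: Rs' => rmem F (restr (fun x => x \in scope F) a) /\ in_all Rs' a
  end.

Definition join_mem (D : Type) (Rs : seq (relation D)) (a : nat -> option D) : Prop :=
  has_dom (fun x => 0 < occ Rs x) a /\ in_all Rs a.

Definition bond_mem (D : Type) (Rs : seq (relation D)) (b : nat -> option D) : Prop :=
  has_dom (fun x => occ Rs x == 1) b /\
  exists a, join_mem Rs a /\ (forall x, occ Rs x == 1 -> a x = b x).

Fixpoint all_factors (D : Type) (P : relation D -> Prop) (Rs : seq (relation D)) : Prop :=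
  match Rs with
  | [::] => True
  | F :: Rs' => P F /\ all_factors P Rs'
  end.

Definition represents (D : Type) (Rs : seq (relation D)) (R : relation D) : Prop :=
  bondable Rs /\
  all_factors (fun S => wf_rel S /\ arity S <= 3) Rs /\
  (forall x, (x \in scope R) = (occ Rs x == 1)) /\
  (forall b, rmem R b <-> bond_mem Rs b).

Definition ternary_count (D : Type) (Rs : seq (relation D)) : nat :=
  count (fun S => arity S == 3) Rs.

Definition finite_ternarity (D : Type) (R : relation D) : Prop :=
  exists Rs, represents Rs R.

Definition is_ter (D : Type) (R : relation D) (k : nat) : Prop :=
  (exists Rs, represents Rs R /\ ternary_count Rs = k) /\
  (forall Rs, represents Rs R -> k <= ternary_count Rs).

Definition has_unary_cartesian_factor (D : Type) (R : relation D) : Prop :=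
  exists i, i \in scope R /\
  exists (P Q : (nat -> option D) -> Prop),
    forall a, rmem R a <->
      (has_dom (fun x => x \in scope R) a /\
       P (restr (pred1 i) a) /\
       Q (restr (fun x => (x \in scope R) && (x != i)) a)).

(* In a bond every attribute of R lies in exactly one factor and every other
   attribute in exactly two, so the scope of R is the symmetric difference of
   the factor scopes, and arity R has the parity of the number of factors of
   odd arity, i.e. of unary plus ternary factors.  A unary factor U on an
   attribute x can be eliminated: x is not an attribute of R, for otherwise U
   would be a unary Cartesian factor of R, so x is shared with exactly one other
   factor S, and U and S can be replaced by their bond, which is S with x
   projected away.  This never increases the number of ternary factors, so a
   representation with ter(R) ternary factors turns into a unary-free one with
   the same number, whence arity R = ter(R) mod 2. *)

From mathcomp Require Import all_boot finmap zify.
From Stdlib Require Import FunctionalExtensionality.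
Set Implicit Arguments. Unset Strict Implicit. Unset Printing Implicit Defensive.
Local Open Scope fset_scope.

Lemma has_split T (p : pred T) (s : seq T) :
  has p s -> exists l1 y l2, s = l1 ++ y :: l2 /\ p y.
Proof. by case/split_find => y l1 l2 py _; exists l1, y, l2; rewrite cat_rcons. Qed.

Lemma eq_restr D (p : pred nat) (a a' : nat -> option D) :
  (forall y, p y -> a y = a' y) -> restr p a = restr p a'.
Proof.
by move=> Eaa'; apply: functional_extensionality => y; rewrite /restr; case: ifP => // /Eaa'.
Qed.

Lemma in_all_cat D (l1 l2 : seq (relation D)) a :
  in_all (l1 ++ l2) a <-> in_all l1 a /\ in_all l2 a.
Proof. by elim: l1 => [|F l IH] /=; tauto. Qed.

Lemma all_factors_cat D P (l1 l2 : seq (relation D)) :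
  all_factors P (l1 ++ l2) <-> all_factors P l1 /\ all_factors P l2.
Proof. by elim: l1 => [|F l IH] /=; tauto. Qed.

Lemma in_all_congr D (L : seq (relation D)) a a' :
  (forall y, 0 < occ L y -> a y = a' y) -> in_all L a -> in_all L a'.
Proof.
elim: L => [|F L IH] //= Eaa' [Fa La]; split.
- by rewrite -(@eq_restr _ _ a) // => y Fy; apply: Eaa'; rewrite /occ /= Fy.
- by apply: IH La => y Ly; apply: Eaa'; rewrite /occ /= addn_gt0 -/(occ L y) Ly orbT.
Qed.

Lemma eq_represents D (Rs Rs' : seq (relation D)) R :
  occ Rs =1 occ Rs' -> (forall a, in_all Rs a <-> in_all Rs' a) ->
  (forall P, all_factors P Rs <-> all_factors P Rs') ->
  represents Rs R -> represents Rs' R.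
Proof.
move=> /functional_extensionality Eocc Ein Efac.
rewrite /represents /bondable /bond_mem /join_mem Eocc Efac.
move=> [bd [facs [scR memR]]]; split=> //; split=> //; split=> // b; rewrite memR.
by split=> -[domb [a [[doma ina] ab]]]; split=> //; exists a; split=> //; split=> //; apply/Ein.
Qed.

Lemma represents_rot D (l1 l2 : seq (relation D)) F R :
  represents (l1 ++ F :: l2) R -> represents (F :: l1 ++ l2) R.
Proof.
apply: eq_represents.
- by move=> x; rewrite /occ /= !count_cat /= addnCA.
- by move=> a; rewrite /= !in_all_cat /=; tauto.
- by move=> P; rewrite /= !all_factors_cat /=; tauto.
Qed.

Definition symd (A B : {fset nat}) := (A `\` B) `|` (B `\` A).

Lemma in_symd A B x : (x \in symd A B) = (x \in A) (+) (x \in B).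
Proof. by rewrite in_fsetU !in_fsetD; case: (x \in A); case: (x \in B). Qed.

Lemma odd_card_symd A B : odd #|` symd A B| = odd #|` A| (+) odd #|` B|.
Proof.
have disjD : (A `\` B) `&` (B `\` A) = fset0.
  by apply/fsetP => y; rewrite in_fsetI !in_fsetD in_fset0; case: (y \in A); case: (y \in B).
have := cardfsUI (A `\` B) (B `\` A); rewrite disjD cardfs0 addn0 => ->.
rewrite -(cardfsID B A) -(cardfsID A B) [B `&` A]fsetIC !oddD.
by case: (odd _); case: (odd _); case: (odd _).
Qed.

Definition symd_scopes D (Rs : seq (relation D)) : {fset nat} :=
  foldr (fun S acc => symd (scope S) acc) fset0 Rs.

Lemma in_symd_scopes D (Rs : seq (relation D)) x :
  (x \in symd_scopes Rs) = odd (occ Rs x).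
Proof.
elim: Rs => [|S Rs IH] /=; first by rewrite in_fset0.
by rewrite in_symd IH /occ /= oddD; case: (x \in scope S).
Qed.

Lemma odd_arity_bond D (Rs : seq (relation D)) R : represents Rs R ->
  odd (arity R) = odd (ternary_count Rs + count (fun S => arity S == 1) Rs).
Proof.
case=> bd [facs [scR _]].
have -> : arity R = #|` symd_scopes Rs|.
  congr #|` _|; apply/fsetP => x; rewrite scR in_symd_scopes.
  by case: (occ Rs x) (bd x) => [|[|[|]]].
elim: Rs facs {bd scR} => [|S Rs IH] //= [[_ S3] facs].
rewrite odd_card_symd IH // /ternary_count /= -/(arity S).
by case: (arity S) S3 => [|[|[|[|]]]] //= _; rewrite add0n add1n addnS.
Qed.

Lemma unary_cartesian_of_bond D (R U : relation D) L x :
  wf_rel R -> represents (U :: L) R -> scope U = [fset x] -> occ L x = 0 ->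
  has_unary_cartesian_factor R.
Proof.
move=> wfR [_ [_ [scR memR]]] Ux Lx.
have occx : occ (U :: L) x = 1 by rewrite /occ /= Ux fset11 -/(occ L x) Lx.
have xR : x \in scope R by rewrite scR occx.
have restrU a : restr (fun y => y \in scope U) a = restr (pred1 x) a.
  by apply: functional_extensionality => y; rewrite /restr Ux in_fset1.
exists x; split=> //.
exists (rmem U), (fun c => exists2 b, rmem R b &
  restr (fun y => (y \in scope R) && (y != x)) b = c) => a; split.
- move=> Ra; split; first exact: wfR.
  have [_ [a0 [[_ [Ua0 _]] a0a]]] := (memR a).1 Ra.
  split; last by exists a.
  by rewrite -(@eq_restr _ _ a0) -?restrU // => y /eqP ->; apply: a0a; rewrite occx.
- move=> [doma [Ua [b Rb ba]]].
  have [_ [a0 [[doma0 [Ua0 La0]] a0b]]] := (memR b).1 Rb.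
  apply/memR; split; first by move=> y; rewrite -scR doma.
  exists (fun y => if y == x then a x else a0 y); split; [split|].
  + move=> y; case: eqP => [->|_]; first by rewrite doma xR occx.
    exact: doma0.
  + split; last by apply: in_all_congr La0 => y; case: eqP => // ->; rewrite Lx.
    by rewrite restrU -(@eq_restr _ _ a) // => y /eqP ->; rewrite eqxx.
  + move=> y occy; case: eqP => [-> //|/eqP nyx].
    have yR : y \in scope R by rewrite scR.
    by rewrite a0b //; have := congr1 (@^~ y) ba; rewrite /restr yR nyx.
Qed.

Definition upd D (a : nat -> option D) x d : nat -> option D :=
  fun y => if y == x then Some d else a y.

Lemma restr_upd D (A : {fset nat}) (b : nat -> option D) x d : x \in A ->
  restr (fun y => y \in A) (upd b x d) = upd (restr (fun y => y \in A `\ x) b) x d.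
Proof.
move=> xA; apply: functional_extensionality => y.
by rewrite /restr /upd in_fsetD1; case: (eqVneq y x) => [->|_] //=; rewrite xA.
Qed.

Lemma restr1_upd D (b : nat -> option D) x d :
  restr (fun y => y \in [fset x]) (upd b x d) = upd (fun _ => None) x d.
Proof. by apply: functional_extensionality => y; rewrite /restr /upd in_fset1; case: eqP. Qed.

Lemma upd_restr D (a : nat -> option D) x d :
  a x = Some d -> upd (restr (fun y => y != x) a) x d = a.
Proof.
by move=> ax; apply: functional_extensionality => y; rewrite /upd /restr; case: eqVneq => [->|].
Qed.

Definition absorb_unary D (U S : relation D) x : relation D :=
  Relation (scope S `\ x)
   (fun b => has_dom (fun y => y \in scope S `\ x) b /\
      exists d, rmem S (upd b x d) /\ rmem U (upd (fun _ => None) x d)).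

Lemma arity_absorb_unary D (U S : relation D) x :
  x \in scope S -> arity (absorb_unary U S x) = (arity S).-1.
Proof. by move=> xS; rewrite /arity [in RHS](cardfsD1 x) xS. Qed.

Section AbsorbUnary.

Variables (D : Type) (U S : relation D) (L : seq (relation D)) (x : nat).
Hypotheses (Ux : scope U = [fset x]) (xS : x \in scope S) (Lx : occ L x = 0).

Local Notation S' := (absorb_unary U S x).

Lemma occ_absorb_unary y :
  occ (S' :: L) y = if y == x then 0 else occ (U :: S :: L) y.
Proof.
by rewrite /occ /= in_fsetD1 Ux in_fset1; case: eqVneq => [->|] //=; rewrite -/(occ L x) Lx.
Qed.

Lemma occ_unary_pair : occ (U :: S :: L) x = 2.
Proof. by rewrite /occ /= Ux fset11 xS -/(occ L x) Lx. Qed.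

Lemma occ1_absorb_unary y : (occ (S' :: L) y == 1) = (occ (U :: S :: L) y == 1).
Proof. by rewrite occ_absorb_unary; case: (eqVneq y x) => [->|]; rewrite ?occ_unary_pair. Qed.

Lemma join_absorb_unary a :
  join_mem (U :: S :: L) a -> join_mem (S' :: L) (restr (fun y => y != x) a).
Proof.
case=> doma [Ua [Sa La]].
have [d ax] : exists d, a x = Some d.
  by case: (a x) (doma x) => [d _|]; [exists d | rewrite occ_unary_pair].
split.
  by move=> y; rewrite occ_absorb_unary /restr; case: eqVneq => //= _; apply: doma.
split; last by apply: in_all_congr La => y; rewrite /restr; case: eqVneq => // ->; rewrite Lx.
split.
  move=> y; rewrite /restr; case: ifP => //= /fsetD1P[nyx yS]; rewrite nyx doma.
  by rewrite /occ /= yS addnS.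
exists d; rewrite -restr_upd // upd_restr //.
by rewrite -(restr1_upd (restr (fun y => y != x) a)) upd_restr // -Ux.
Qed.

Lemma join_unabsorb_unary a :
  join_mem (S' :: L) a -> exists d, join_mem (U :: S :: L) (upd a x d).
Proof.
case=> doma [[_ [d [Sd Ud]]] La]; exists d; split.
  move=> y; rewrite /upd; case: (eqVneq y x) => [->|nyx]; first by rewrite occ_unary_pair.
  by rewrite doma occ_absorb_unary (negbTE nyx).
split; first by rewrite Ux restr1_upd.
split; first by rewrite restr_upd.
by apply: in_all_congr La => y; rewrite /upd; case: eqVneq => // ->; rewrite Lx.
Qed.

Lemma bond_absorb_unary b : bond_mem (U :: S :: L) b <-> bond_mem (S' :: L) b.
Proof.
split=> -[domb [a [ja ab]]]; (split=> [y|]; first by rewrite domb occ1_absorb_unary).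
- exists (restr (fun y => y != x) a); split; first exact: join_absorb_unary.
  move=> y; rewrite occ1_absorb_unary /restr => occy; rewrite ab //.
  by case: (eqVneq y x) occy => // ->; rewrite occ_unary_pair.
- have [d jd] := join_unabsorb_unary ja; exists (upd a x d); split=> // y.
  rewrite -occ1_absorb_unary /upd => occy; rewrite ab //.
  by case: (eqVneq y x) occy => // ->; rewrite occ_absorb_unary eqxx.
Qed.

Lemma represents_absorb_unary R : represents (U :: S :: L) R -> represents (S' :: L) R.
Proof.
case=> bd [[_ [[_ S3] facs]] [scR memR]]; split; [|split; [|split]].
- by move=> y; rewrite occ_absorb_unary; case: eqP.
- split=> //; split; first by move=> b [].
  by rewrite arity_absorb_unary // (leq_trans (leq_pred _)).
- by move=> y; rewrite occ1_absorb_unary.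
- by move=> b; rewrite memR bond_absorb_unary.
Qed.

End AbsorbUnary.

Lemma represents_absorb_step D (R U : relation D) L :
  wf_rel R -> ~ has_unary_cartesian_factor R -> represents (U :: L) R -> arity U = 1 ->
  exists2 Rs, represents Rs R & size Rs <= size L /\ ternary_count Rs <= ternary_count L.
Proof.
move=> wfR noCart repUL /eqP/cardfs1P[x Ux].
have Lx : occ L x = 1.
  case Lx: (occ L x) => [|[|n]] //.
    by case: noCart; apply: unary_cartesian_of_bond wfR repUL Ux Lx.
  by have := repUL.1 x; rewrite /occ /= Ux fset11 -/(occ L x) Lx.
have /has_split[m1 [S [m2 [EL xS]]]] : has (fun S => x \in scope S) L.
  by rewrite has_count -/(occ L x) Lx.
have m12x : occ (m1 ++ m2) x = 0 by move: Lx; rewrite EL /occ !count_cat /= xS; lia.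
rewrite {}EL in repUL *.
have repUS : represents (U :: S :: m1 ++ m2) R.
  by apply: (represents_rot (l1 := [:: S])); apply: (represents_rot (l1 := U :: m1)).
have S3 : arity S <= 3 by case: repUS => _ [[_ [[_ S3] _]] _].
exists (absorb_unary U S x :: m1 ++ m2); first exact: represents_absorb_unary.
rewrite /ternary_count /= !size_cat !count_cat /= arity_absorb_unary //.
have -> : ((arity S).-1 == 3) = false by case: (arity S) S3 => [|[|[|[|]]]].
by split; lia.
Qed.

Lemma unary_free_representation D (R : relation D) Rs :
  wf_rel R -> ~ has_unary_cartesian_factor R -> represents Rs R ->
  exists2 Rs', represents Rs' R &
    ~~ has (fun S => arity S == 1) Rs' /\ ternary_count Rs' <= ternary_count Rs.
Proof.
move=> wfR noCart.
elim: {Rs}(size Rs).+1 {-2}Rs (ltnSn (size Rs)) => // n IH Rs ltRs repRs.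
case unaryRs: (has (fun S => arity S == 1) Rs); last by exists Rs; rewrite ?unaryRs.
move: unaryRs ltRs repRs => /has_split[l1 [U [l2 [-> /eqP U1]]]] ltRs /represents_rot repU.
have [Rs' repRs' [szRs' terRs']] := represents_absorb_step wfR noCart repU U1.
have [|Rs'' repRs'' [freeRs'' terRs'']] := IH Rs' _ repRs'.
  by move: ltRs szRs'; rewrite !size_cat /=; lia.
exists Rs'' => //; split=> //; apply: (leq_trans terRs''); apply: (leq_trans terRs').
by rewrite /ternary_count !count_cat /= leq_add2l leq_addl.
Qed.

Theorem corollary42 (D : Type) (R : relation D) :
  wf_rel R -> finite_ternarity R -> ~ has_unary_cartesian_factor R ->
  forall k, is_ter R k -> odd k = odd (arity R).
Proof.
move=> wfR _ noCart k [[Rs [repRs <-]] minRs].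
have [Rs' repRs' [unaryfree leRs']] := unary_free_representation wfR noCart repRs.
have -> : ternary_count Rs = ternary_count Rs'.
  by apply/eqP; rewrite eqn_leq leRs' minRs.
move: unaryfree; rewrite has_count lt0n negbK => /eqP no_unary.
by rewrite (odd_arity_bond repRs') no_unary addn0.
Qed.
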